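(* Fix $n\in\mathbb N$, a diagonal matrix $D=\mathrm{diag}(d_1,\dots,d_n)$ with positive diagonal entries, and vectors $\mathbf v=(v_1,\dots,v_n)^\top$, $\mathbf c=(c_1,\dots,c_n)^\top\in\mathbb R^n$ such that $c_i\ne0$ for some $i\in\{1,\dots,n-1\}$. Set $\mathbf 1_A=1$ if $v_n-\frac{\mathbf c^\top D^{-1}\mathbf v}{\mathbf c^\top D^{-1}\mathbf c}c_n<0$ and $\mathbf 1_A=0$ otherwise, and define $$\lambda^*=\frac{\mathbf c^\top D^{-1}\mathbf v-c_nv_nd_n^{-1}\mathbf 1_A}{\mathbf c^\top D^{-1}\mathbf c-c_n^2d_n^{-1}\mathbf 1_A},\qquad\mu^*=(v_n-\lambda^*c_n)^-,\qquad\mathbf z^*=D^{-1}(\mathbf v-\lambda^*\mathbf c+\mu^*\mathbf e_n).$$ (a) $\mathbf z^*$ is the unique optimiser of the primal problem: minimise $\frac12\mathbf z^\top D\mathbf z-\mathbf v^\top\mathbf z$ subject to $\mathbf z\in\mathbb R^n$, $\mathbf c^\top\mathbf z=0$, $z_n\ge0$; and $\|\mathbf z^*\|\le d_{\min}^{-1}\|\mathbf v\|$, where $d_{\min}=\min(d_1,\dots,d_n)$. (b) $(\lambda^*,\mu^* )$ is the unique optimiser of the dual problem of this primal problem, which can be written as: maximise $-\frac12(\mathbf v-\lambda\mathbf c+\mu\mathbf e_n)^\top D^{-1}(\mathbf v-\lambda\mathbf c+\mu\mathbf e_n)$ subject to $\lambda\in\mathbb R$, $\mu\ge0$. Moreover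 $\|\lambda^*\mathbf c-\mu^*\mathbf e_n\|\le(1+\frac{d_{\max}}{d_{\min}})\|\mathbf v\|$, where $d_{\max}=\max(d_1,\dots,d_n)$. (c) The optimal values of the primal and dual problems coincide (no duality gap) and equal $-\frac12\mathbf v^\top\mathbf z^*$. (d) The triple satisfies $\mathbf z^*=\arg\min_{\mathbf z\in\mathbb R^n}L(\mathbf z,\lambda^*,\mu^* )$, $\mathbf c^\top\mathbf z^*=0$, $z^*_n\ge0$, $\mu^*\ge0$, $\mu^*z^*_n=0$, where $L$ is the Lagrangian of the primal problem; moreover $(\lambda^*,\mu^* )$ is a Lagrange multiplier for the primal problem.
   Context: $\mathbf e_n$ denotes the $n$-th unit vector, $\|\cdot\|$ the Euclidean norm, and $x^-=\max(-x,0)$. For a primal problem ''minimise $f(\mathbf z)$ subject to $\mathbf z\in\mathbb R^n$, $h(\mathbf z)=0$, $g(\mathbf z)\le0$'' with optimal value $f^*$, the Lagrangian is $L(\mathbf z,\lambda,\mu)=f(\mathbf z)+\lambda h(\mathbf z)+\mu g(\mathbf z)$; a pair $(\lambda^*,\mu^* )$ is a Lagrange multiplier if $f^*=\inf_{\mathbf z\in\mathbb R^n}L(\mathbf z,\lambda^*,\mu^* )$ and $\mu^*\ge0$; the dual problem is ''maximise $q(\lambda,\mu)=\inf_{\mathbf z\in\mathbb R^n}L(\mathbf z,\lambda,\mu)$ subject to $\lambda\in\mathbb R$, $\mu\ge0$''. Here $f(\mathbf z)=\frac12\mathbf z^\top D\mathbf z-\mathbf v^\top\mathbf z$, $h(\mathbf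 z)=\mathbf c^\top\mathbf z$, $g(\mathbf z)=-z_n$, so $L(\mathbf z,\lambda,\mu)=\frac12\mathbf z^\top D\mathbf z-\mathbf v^\top\mathbf z+\lambda\mathbf c^\top\mathbf z-\mu\mathbf e_n^\top\mathbf z$. *)

From HB Require Import structures.
From mathcomp Require Import all_boot all_order all_algebra.
From mathcomp Require Import classical_sets reals.
Set Implicit Arguments. Unset Strict Implicit. Unset Printing Implicit Defensive.
Import Order.TTheory GRing.Theory Num.Theory.
Local Open Scope ring_scope.
Local Open Scope classical_set_scope.

(* Vectors of R^(n+1) are column vectors 'cV[R]_n.+1; the last coordinate
   (index n+1 in 1-based numbering) is ord_max. *)
Section Defs.
Variables (R : realType) (n : nat).
Notation V := 'cV[R]_n.+1.

Definition dotv (x y : V) : R := (x^T *m y) 0 0.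
Definition qform (A : 'M[R]_n.+1) (x : V) : R := (x^T *m A *m x) 0 0.
Definition enorm (x : V) : R := Num.sqrt (dotv x x).
Definition elast : V := delta_mx ord_max 0.
Definition negpart (x : R) : R := Num.max (- x) 0.

Variables (d : 'rV[R]_n.+1) (v c : V).
Definition Dm : 'M[R]_n.+1 := diag_mx d.
Definition dmin : R := \big[Num.min/d 0 ord0]_(i < n.+1) d 0 i.
Definition dmax : R := \big[Num.max/d 0 ord0]_(i < n.+1) d 0 i.

Definition fobj (z : V) : R := 1/2 * qform Dm z - dotv v z.
Definition hcon (z : V) : R := dotv c z.
Definition gcon (z : V) : R := - z ord_max 0.
Definition feasible (z : V) : Prop := hcon z = 0 /\ gcon z <= 0.
Definition lagrangian (z : V) (la mu : R) : R :=
  fobj z + la * hcon z + mu * gcon z.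
Definition primal_value : R := inf [set fobj z | z in feasible].
Definition dual_fun (la mu : R) : R := inf [set lagrangian z la mu | z in setT].
Definition dual_value : R :=
  sup [set q | exists la mu, 0 <= mu /\ q = dual_fun la mu].
Definition is_lagrange_multiplier (la mu : R) : Prop :=
  primal_value = inf [set lagrangian z la mu | z in setT] /\ 0 <= mu.

Definition cDv : R := (c^T *m invmx Dm *m v) 0 0.
Definition cDc : R := (c^T *m invmx Dm *m c) 0 0.
Definition indA : R :=
  if v ord_max 0 - cDv / cDc * c ord_max 0 < 0 then 1 else 0.
Definition lambda_star : R :=
  (cDv - c ord_max 0 * v ord_max 0 / d 0 ord_max * indA)
  / (cDc - (c ord_max 0) ^+ 2 / d 0 ord_max * indA).
Definition mu_star : R := negpart (v ord_max 0 - lambda_star * c ord_max 0).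
Definition z_star : V :=
  invmx Dm *m (v - lambda_star *: c + mu_star *: elast).
End Defs.

From HB Require Import structures.
From mathcomp Require Import all_boot all_order all_algebra.
From mathcomp Require Import classical_sets reals.
From mathcomp Require Import ring lra.
Import Order.TTheory GRing.Theory Num.Theory.
Set Implicit Arguments. Unset Strict Implicit. Unset Printing Implicit Defensive.
Local Open Scope ring_scope.
Local Open Scope classical_set_scope.

(** For fixed multipliers [l], [m] the Lagrangian is the objective [fobj] with [v]
  replaced by [w = v - l c + m e_n]: a separable strictly convex quadratic whose unique
  minimiser is [D^-1 w] and whose minimum [-1/2 w^T D^-1 w] is the dual function.
  The formula for [lambda_star], where the indicator records whether the sign constraint
  is active, is exactly what makes [z = D^-1 w(lambda_star, mu_star)] satisfy the KKT
  conditions [c^T z = 0], [z_n >= 0], [mu_star z_n = 0].  Hence on the feasible set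
  [f z = L(z, lambda_star, mu_star) <= L(y, lambda_star, mu_star) <= f y], and for
  [m >= 0] we get [q(l, m) <= L(z, l, m) = f z - m z_n <= f z = q(lambda_star, mu_star)].
  Both inequalities are strict off the optimisers, by strict convexity in the primal
  variable and because [(l, m) |-> v - l c + m e_n] is injective once [c_i <> 0] for some
  [i < n].  The norm bounds follow from [z^T D z = v^T z]. *)

Lemma inf_eq_min (R : realType) (E : set R) x :
  E x -> (forall y, E y -> x <= y) -> inf E = x.
Proof.
move=> Ex lbx; apply/le_anti/andP; split; first by apply: ge_inf => //; exists x.
by apply: lb_le_inf => //; exists x.
Qed.

Lemma sup_eq_max (R : realType) (E : set R) x :
  E x -> (forall y, E y -> y <= x) -> sup E = x.
Proof.
move=> Ex ubx; apply/le_anti/andP; split; first by apply: ge_sup => //; exists x.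
by apply: sup_upper_bound => //; split; exists x.
Qed.

Lemma sqrtr_le_mul (R : rcfType) (S T k : R) :
  0 <= k -> 0 <= T -> S <= k ^+ 2 * T -> Num.sqrt S <= k * Num.sqrt T.
Proof.
move=> k_ge0 T_ge0 le_ST; rewrite -[k in k * _]ger0_norm // -sqrtr_sqr -sqrtrM ?sqr_ge0 //.
by rewrite ler_sqrt // mulr_ge0 ?sqr_ge0.
Qed.

Lemma negpart_ge0 (R : realType) (x : R) : 0 <= negpart x.
Proof. by rewrite /negpart le_max lexx orbT. Qed.

(* [a] and [b] stand for the parts of [c^T D^-1 v] and [c^T D^-1 c] coming from the
   first [n] coordinates; [zn] is the last coordinate of [z_star]. *)
Lemma kkt_scalar (R : realType) (a b cn vn dn cDv cDc : R) : 0 < b -> 0 < dn ->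
  cDv = a + cn * vn / dn -> cDc = b + cn ^+ 2 / dn ->
  let ind := if vn - cDv / cDc * cn < 0 then 1 else 0 in
  let la := (cDv - cn * vn / dn * ind) / (cDc - cn ^+ 2 / dn * ind) in
  let mu := negpart (vn - la * cn) in
  let zn := (vn - la * cn + mu) / dn in
  [/\ a - la * b + cn * zn = 0, 0 <= zn & mu * zn = 0].
Proof.
move=> b_gt0 dn_gt0 cDvE cDcE ind la mu zn.
have cDc_gt0 : 0 < cDc.
  by rewrite cDcE; have := divr_ge0 (sqr_ge0 cn) (ltW dn_gt0); lra.
have [b_neq0 dn_neq0 cDc_neq0] :=
  And3 (lt0r_neq0 b_gt0) (lt0r_neq0 dn_gt0) (lt0r_neq0 cDc_gt0).
move: @ind @la @mu @zn => /=; case: ifP => active.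
- (* [zn = 0], and [la = a / b] makes the first [n] coordinates orthogonal to [c] *)
  have -> : (cDv - cn * vn / dn * 1) / (cDc - cn ^+ 2 / dn * 1) = a / b.
    by rewrite cDvE cDcE; congr (_ / _); ring.
  have resid_lt0 : vn - a / b * cn < 0.
    have -> : vn - a / b * cn = (vn - cDv / cDc * cn) * cDc / b.
      have -> : (vn - cDv / cDc * cn) * cDc / b = (vn * cDc - cDv * cn) / b.
        by field; rewrite b_neq0 cDc_neq0.
      by rewrite cDvE cDcE; field; rewrite b_neq0 dn_neq0.
    by rewrite pmulr_llt0 ?invr_gt0 // pmulr_llt0.
  have -> : negpart (vn - a / b * cn) = - (vn - a / b * cn).
    by apply/max_idPl; rewrite oppr_ge0 ltW.
  by rewrite subrr mul0r !mulr0 addr0; split=> //; field.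
- have resid_ge0 : 0 <= vn - cDv / cDc * cn by rewrite leNgt active.
  rewrite !mulr0 !subr0 (_ : negpart _ = 0); last by apply/max_idPr; rewrite oppr_le0.
  rewrite addr0 mul0r; split; rewrite ?divr_ge0 ?(ltW dn_gt0) //.
  have -> : a - cDv / cDc * b + cn * ((vn - cDv / cDc * cn) / dn)
            = (a + cn * vn / dn) - cDv / cDc * (b + cn ^+ 2 / dn).
    by field; rewrite dn_neq0.
  by rewrite -cDvE -cDcE divfK ?subrr.
Qed.

Lemma two_mul_le_sqr (R : realFieldType) (r x y : R) :
  0 < r -> 2 * (x * y) <= r * x ^+ 2 + y ^+ 2 / r.
Proof.
move=> r_gt0; rewrite -subr_ge0.
have -> : r * x ^+ 2 + y ^+ 2 / r - 2 * (x * y) = (r * x - y) ^+ 2 / r.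
  by field; rewrite lt0r_neq0.
by rewrite divr_ge0 ?sqr_ge0 ?ltW.
Qed.

Section Coordinates.
Variables (R : realType) (n : nat).
Notation V := 'cV[R]_n.+1.

Lemma col_neq_coord (y z : V) : y != z -> exists i, y i 0 != z i 0.
Proof.
move=> neq_yz; apply/existsP; apply: contraTT neq_yz => /existsPn eq_yz.
by rewrite negbK; apply/eqP/matrixP => i j; rewrite ord1; apply/eqP/negPn/eq_yz.
Qed.

Lemma dotvE (x y : V) : dotv x y = \sum_i x i 0 * y i 0.
Proof. by rewrite /dotv mxE; apply: eq_bigr => i _; rewrite mxE. Qed.

Lemma dotvDl (x x' y : V) : dotv (x + x') y = dotv x y + dotv x' y.
Proof. by rewrite /dotv linearD /= mulmxDl mxE. Qed.

Lemma dotvZl a (x y : V) : dotv (a *: x) y = a * dotv x y.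
Proof. by rewrite /dotv linearZ /= -scalemxAl mxE. Qed.

Lemma dotv_elast (y : V) : dotv (elast R n) y = y ord_max 0.
Proof.
rewrite dotvE (bigD1 ord_max) //= big1 => [|i /negPf neq_i]; rewrite !mxE ?neq_i /=.
  by rewrite eqxx mul1r addr0.
by rewrite mul0r.
Qed.

Lemma dotvC (x y : V) : dotv x y = dotv y x.
Proof. by rewrite !dotvE; apply: eq_bigr => i _; rewrite mulrC. Qed.

Lemma qform_diagE (e : 'rV[R]_n.+1) (x : V) :
  qform (diag_mx e) x = \sum_i e 0 i * x i 0 ^+ 2.
Proof.
rewrite /qform -mulmxA mul_diag_mx mxE; apply: eq_bigr => i _.
by rewrite !mxE; ring.
Qed.

Lemma enormE (x : V) : enorm x = Num.sqrt (\sum_i x i 0 ^+ 2).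
Proof. by rewrite /enorm dotvE; congr Num.sqrt; apply: eq_bigr => i _; rewrite expr2. Qed.

End Coordinates.

Section DiagonalQuadratic.
Variables (R : realType) (n : nat) (d : 'rV[R]_n.+1).
Hypothesis d_gt0 : forall i, 0 < d 0 i.
Notation V := 'cV[R]_n.+1.
Notation Dinv := (invmx (Dm d)).

Let d_neq0 i : d 0 i != 0. Proof. by rewrite gt_eqF. Qed.

Lemma Dm_unit : Dm d \in unitmx.
Proof. by rewrite unitmxE det_diag unitfE; apply/prodf_neq0 => i _. Qed.

Lemma invmx_Dm : Dinv = diag_mx (\row_i (d 0 i)^-1).
Proof.
have Dm_mulV : Dm d *m diag_mx (\row_i (d 0 i)^-1) = 1%:M.
  apply/matrixP => i j; rewrite mul_diag_mx !mxE.
  by case: (i =P j) => [->|_]; rewrite ?mulr1n ?mulr0n ?mulr0 ?divff.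
by rewrite -[LHS]mulmx1 -Dm_mulV mulmxA mulVmx ?Dm_unit ?mul1mx.
Qed.

Lemma invDm_mulE (w : V) i : (Dinv *m w) i 0 = w i 0 / d 0 i.
Proof. by rewrite invmx_Dm mul_diag_mx !mxE mulrC. Qed.

Lemma Dm_mulE (x : V) i : (Dm d *m x) i 0 = d 0 i * x i 0.
Proof. by rewrite mul_diag_mx mxE. Qed.

Lemma qform_DmE (x : V) : qform (Dm d) x = \sum_i d 0 i * x i 0 ^+ 2.
Proof. exact: qform_diagE. Qed.

Lemma invDm_formE (x y : V) : (x^T *m Dinv *m y) 0 0 = \sum_i x i 0 * y i 0 / d 0 i.
Proof. by rewrite -mulmxA mxE; apply: eq_bigr => i _; rewrite invDm_mulE mxE mulrA. Qed.

Lemma qform_invDmE (x : V) : qform Dinv x = \sum_i x i 0 ^+ 2 / d 0 i.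
Proof. by rewrite /qform invDm_formE; apply: eq_bigr => i _; rewrite expr2. Qed.

Lemma fobjE (w y : V) : fobj d w y = \sum_i (d 0 i * y i 0 ^+ 2 / 2 - w i 0 * y i 0).
Proof.
rewrite /fobj qform_DmE dotvE sumrB mulr_sumr; congr (_ - _).
by apply: eq_bigr => i _; ring.
Qed.

Lemma fobj_sub_min (w y : V) :
  fobj d w y - fobj d w (Dinv *m w) = \sum_i d 0 i * (y i 0 - w i 0 / d 0 i) ^+ 2 / 2.
Proof.
rewrite !fobjE -sumrB; apply: eq_bigr => i _.
by rewrite invDm_mulE; field; rewrite d_neq0.
Qed.

Lemma fobj_min_value (w : V) : fobj d w (Dinv *m w) = - (1/2) * qform Dinv w.
Proof.
rewrite fobjE qform_invDmE mulr_sumr; apply: eq_bigr => i _.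
by rewrite invDm_mulE; field; rewrite d_neq0.
Qed.

Lemma fobj_min_strict (w y : V) : y != Dinv *m w -> fobj d w (Dinv *m w) < fobj d w y.
Proof.
move=> /col_neq_coord [i neq_i]; rewrite -subr_gt0 fobj_sub_min (bigD1 i) //=.
apply: ltr_pwDl.
  rewrite divr_gt0 // mulr_gt0 // lt0r sqr_ge0 sqrf_eq0 subr_eq0 andbT.
  by rewrite -invDm_mulE.
apply: sumr_ge0 => j _; apply: divr_ge0 => //.
by rewrite mulr_ge0 ?sqr_ge0 ?(ltW (d_gt0 j)).
Qed.

Lemma fobj_min (w y : V) : fobj d w (Dinv *m w) <= fobj d w y.
Proof. by have [->//|neq_y] := eqVneq y (Dinv *m w); exact/ltW/fobj_min_strict. Qed.

Section Lagrangian.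
Variables v c : V.

Definition lag_coef (l m : R) : V := v - l *: c + m *: elast R n.

Lemma dotv_lag_coef l m y :
  dotv (lag_coef l m) y = dotv v y - l * dotv c y + m * y ord_max 0.
Proof. by rewrite /lag_coef -scaleNr !dotvDl !dotvZl dotv_elast mulNr. Qed.

Lemma lagrangianE y l m : lagrangian d v c y l m = fobj d (lag_coef l m) y.
Proof. by rewrite /lagrangian /fobj dotv_lag_coef /hcon /gcon; ring. Qed.

Lemma dual_fun_min l m :
  dual_fun d v c l m = lagrangian d v c (Dinv *m lag_coef l m) l m.
Proof.
apply: inf_eq_min; first by exists (Dinv *m lag_coef l m).
by move=> _ [y _ <-]; rewrite !lagrangianE; apply: fobj_min.
Qed.

Lemma dual_funE l m : dual_fun d v c l m = - (1/2) * qform Dinv (lag_coef l m).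
Proof. by rewrite dual_fun_min lagrangianE fobj_min_value. Qed.

Lemma lag_coef_inj l m l' m' : (exists i : 'I_n.+1, (i < n)%N /\ c i 0 != 0) ->
  lag_coef l m = lag_coef l' m' -> (l, m) = (l', m').
Proof.
move=> [i [lt_in c_neq0]] /matrixP eq_coef.
have coefE l1 m1 j : lag_coef l1 m1 j 0 = v j 0 - l1 * c j 0 + m1 * (j == ord_max)%:R.
  by rewrite !mxE eqxx andbT.
have eq_l : l = l'.
  have := eq_coef i 0; rewrite !coefE (_ : i == ord_max = false); last first.
    by apply/negbTE; rewrite -val_eqE /= neq_ltn lt_in.
  by rewrite !mulr0 !addr0 => /addrI /oppr_inj /(mulIf c_neq0).
by have := eq_coef ord_max 0; rewrite !coefE eqxx !mulr1 eq_l => /addrI ->.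
Qed.

End Lagrangian.
End DiagonalQuadratic.

Section Candidate.
Variables (R : realType) (n : nat) (d : 'rV[R]_n.+1) (v c : 'cV[R]_n.+1).
Hypothesis d_gt0 : forall i, 0 < d 0 i.
Hypothesis c_neq0 : exists i : 'I_n.+1, (i < n)%N /\ c i 0 != 0.
Notation la := (lambda_star d v c).
Notation mu := (mu_star d v c).
Notation zs := (z_star d v c).

Lemma z_starE : zs = invmx (Dm d) *m lag_coef v c la mu.
Proof. by []. Qed.

Lemma Dm_mul_z_star : Dm d *m zs = lag_coef v c la mu.
Proof. by rewrite mulKVmx ?Dm_unit. Qed.

Lemma z_star_kkt : [/\ hcon c zs = 0, 0 <= zs ord_max 0 & mu * zs ord_max 0 = 0].
Proof.
pose a := \sum_(i | i != ord_max) c i 0 * v i 0 / d 0 i.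
pose b := \sum_(i | i != ord_max) c i 0 ^+ 2 / d 0 i.
have b_gt0 : 0 < b.
  have [i [lt_in ci_neq0]] := c_neq0.
  rewrite /b (bigD1 i) /=; last by rewrite -val_eqE /= neq_ltn lt_in.
  apply: ltr_pwDl; first by rewrite divr_gt0 // lt0r sqr_ge0 sqrf_eq0 ci_neq0.
  by apply: sumr_ge0 => j _; rewrite divr_ge0 ?sqr_ge0 ?(ltW (d_gt0 j)).
have cDvE : cDv d v c = a + c ord_max 0 * v ord_max 0 / d 0 ord_max.
  by rewrite /cDv invDm_formE // (bigD1 ord_max) //= addrC.
have cDcE : cDc d c = b + c ord_max 0 ^+ 2 / d 0 ord_max.
  rewrite /cDc invDm_formE // (bigD1 ord_max) //= addrC expr2.
  by congr (_ + _); apply: eq_bigr => i _; rewrite expr2.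
have zsE i : zs i 0 = (v i 0 - la * c i 0 + mu * (i == ord_max)%:R) / d 0 i.
  by rewrite z_starE invDm_mulE // !mxE eqxx andbT.
have hconE : hcon c zs = a - la * b + c ord_max 0 * zs ord_max 0.
  rewrite /hcon dotvE (bigD1 ord_max) //= addrC /a /b mulr_sumr -sumrB.
  congr (_ + _); apply: eq_bigr => i /negPf neq_i.
  by rewrite zsE neq_i mulr0 addr0; field; rewrite lt0r_neq0.
rewrite hconE zsE eqxx mulr1.
exact: (kkt_scalar b_gt0 (d_gt0 ord_max) cDvE cDcE).
Qed.

Lemma z_star_feasible : feasible c zs.
Proof. by have [orth zn_ge0 _] := z_star_kkt; split; rewrite // /gcon oppr_le0. Qed.

Lemma lagrangian_z_star l m : lagrangian d v c zs l m = fobj d v zs - m * zs ord_max 0.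
Proof. by have [orth _ _] := z_star_kkt; rewrite /lagrangian orth /gcon; ring. Qed.

Lemma fobj_z_star_lagrangian : fobj d v zs = lagrangian d v c zs la mu.
Proof. by have [_ _ compl] := z_star_kkt; rewrite lagrangian_z_star compl subr0. Qed.

Lemma lagrangian_z_star_strict y :
  y != zs -> lagrangian d v c zs la mu < lagrangian d v c y la mu.
Proof. by rewrite !lagrangianE z_starE; apply: fobj_min_strict. Qed.

Lemma lagrangian_le_fobj l m y :
  0 <= m -> feasible c y -> lagrangian d v c y l m <= fobj d v y.
Proof. by move=> m_ge0 [hy gy]; rewrite /lagrangian hy mulr0 addr0 gerDl mulr_ge0_le0. Qed.

Lemma z_star_primal_strict y : feasible c y -> y != zs -> fobj d v zs < fobj d v y.
Proof.
move=> feas_y neq_y; rewrite fobj_z_star_lagrangian.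
apply: lt_le_trans (lagrangian_z_star_strict neq_y) _.
exact: lagrangian_le_fobj (negpart_ge0 _) feas_y.
Qed.

Lemma primal_valueE : primal_value d v c = fobj d v zs.
Proof.
apply: inf_eq_min; first by exists zs; first exact: z_star_feasible.
move=> _ [y feas_y <-]; have [->//|neq_y] := eqVneq y zs.
exact/ltW/z_star_primal_strict.
Qed.

Lemma dual_fun_z_star : dual_fun d v c la mu = fobj d v zs.
Proof. by rewrite dual_fun_min // -z_starE -fobj_z_star_lagrangian. Qed.

Lemma dual_fun_strict l m : 0 <= m -> (l, m) != (la, mu) ->
  dual_fun d v c l m < dual_fun d v c la mu.
Proof.
move=> m_ge0 neq_lm; rewrite dual_fun_min // dual_fun_z_star lagrangianE.
have neq_zs : zs != invmx (Dm d) *m lag_coef v c l m.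
  apply: contra_neq neq_lm => eq_zs; symmetry; apply: (lag_coef_inj (v := v) c_neq0).
  by rewrite -Dm_mul_z_star eq_zs mulKVmx ?Dm_unit.
apply: (lt_le_trans (fobj_min_strict d_gt0 neq_zs)).
have [_ zn_ge0 _] := z_star_kkt.
by rewrite -lagrangianE lagrangian_z_star gerDl oppr_le0 mulr_ge0.
Qed.

Lemma dual_valueE : dual_value d v c = dual_fun d v c la mu.
Proof.
apply: sup_eq_max; first by exists la, mu; split; first exact: negpart_ge0.
move=> _ [l [m [m_ge0 ->]]]; have [[-> ->]//|neq_lm] := eqVneq (l, m) (la, mu).
exact/ltW/dual_fun_strict.
Qed.

Lemma qform_z_star : qform (Dm d) zs = dotv v zs.
Proof.
have [orth _ compl] := z_star_kkt.
rewrite /qform -mulmxA Dm_mul_z_star -/(dotv zs _) dotvC dotv_lag_coef.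
by rewrite -/(hcon c zs) orth compl mulr0 subr0 addr0.
Qed.

Lemma fobj_z_star : fobj d v zs = - (1/2) * dotv v zs.
Proof. by rewrite /fobj qform_z_star; field. Qed.

End Candidate.

Section NormBounds.
Variables (R : realType) (n : nat) (d : 'rV[R]_n.+1).
Hypothesis d_gt0 : forall i, 0 < d 0 i.
Notation V := 'cV[R]_n.+1.

Lemma dmin_le i : dmin d <= d 0 i.
Proof. exact: bigmin_le. Qed.

Lemma le_dmax i : d 0 i <= dmax d.
Proof. exact: le_bigmax. Qed.

Lemma dmin_gt0 : 0 < dmin d.
Proof.
by apply: (big_ind (fun x => 0 < x)) => // x y x_gt0 y_gt0; rewrite lt_min x_gt0.
Qed.

Lemma dmin_le_dmax : dmin d <= dmax d.
Proof. exact: le_trans (dmin_le ord0) (le_dmax ord0). Qed.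

Lemma dmin_sqr_sum_le (z w : V) : qform (Dm d) z = dotv w z ->
  dmin d ^+ 2 * \sum_i z i 0 ^+ 2 <= \sum_i w i 0 ^+ 2.
Proof.
rewrite qform_DmE dotvE => zDz.
have dmin_pos := dmin_gt0.
set S := \sum_i z i 0 ^+ 2; set T := \sum_i w i 0 ^+ 2.
have le_dS : dmin d * S <= \sum_i w i 0 * z i 0.
  rewrite -zDz mulr_sumr; apply: ler_sum => i _.
  by rewrite ler_wpM2r ?sqr_ge0 ?dmin_le.
have le_amgm : 2 * \sum_i w i 0 * z i 0 <= dmin d * S + T / dmin d.
  rewrite mulr_sumr mulr_sumr mulr_suml -big_split; apply: ler_sum => i _.
  by rewrite [w i 0 * _]mulrC two_mul_le_sqr.
have : dmin d * (dmin d * S) <= dmin d * (T / dmin d) by rewrite ler_pM2l //; lra.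
by rewrite mulrA -expr2 mulrCA divff ?mulr1 // lt0r_neq0.
Qed.

Lemma enorm_le_dmin (z w : V) : qform (Dm d) z = dotv w z ->
  enorm z <= (dmin d)^-1 * enorm w.
Proof.
move=> /dmin_sqr_sum_le le_zw; have dmin_pos := dmin_gt0.
rewrite !enormE; apply: sqrtr_le_mul.
- by rewrite invr_ge0 ltW.
- by apply: sumr_ge0 => i _; apply: sqr_ge0.
- by rewrite exprVn ler_pdivlMl ?exprn_gt0.
Qed.

(* With [r = dmax / dmin], the square of [w_i - d_i z_i] is split by [two_mul_le_sqr];
   the weights [1 + r] and [1 + 1/r] then recombine into [(1 + r)^2]. *)
Lemma enorm_sub_Dm_le (z w : V) : qform (Dm d) z = dotv w z ->
  enorm (w - Dm d *m z) <= (1 + dmax d / dmin d) * enorm w.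
Proof.
move=> /dmin_sqr_sum_le le_zw; have dmin_pos := dmin_gt0.
have dmax_pos : 0 < dmax d := lt_le_trans dmin_pos dmin_le_dmax.
set r := dmax d / dmin d; have r_gt0 : 0 < r by rewrite divr_gt0.
set S := \sum_i z i 0 ^+ 2 in le_zw; set T := \sum_i w i 0 ^+ 2 in le_zw *.
set Q := \sum_i (d 0 i * z i 0) ^+ 2.
have le_sub : \sum_i (w - Dm d *m z) i 0 ^+ 2 <= (1 + r) * T + (1 + r^-1) * Q.
  rewrite /T /Q !mulr_sumr -big_split; apply: ler_sum => i _ /=.
  rewrite (_ : (w - Dm d *m z) i 0 = w i 0 - d 0 i * z i 0); last by rewrite -Dm_mulE !mxE.
  set x := w i 0; set y := d 0 i * z i 0.
  have := two_mul_le_sqr (- x) y r_gt0; rewrite sqrrN.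
  have -> : (x + - y) ^+ 2 = x ^+ 2 + y ^+ 2 + 2 * (- x * y) by ring.
  by rewrite !mulrDl !mul1r mulrC [r^-1 * _]mulrC; lra.
have le_Q : Q <= r ^+ 2 * T.
  apply: le_trans (_ : dmax d ^+ 2 * S <= _).
    rewrite /S mulr_sumr; apply: ler_sum => i _; rewrite exprMn ler_wpM2r ?sqr_ge0 //.
    by rewrite lerXn2r ?nnegrE ?le_dmax ?(ltW (d_gt0 i)) ?(ltW dmax_pos).
  have -> : dmax d ^+ 2 * S = r ^+ 2 * (dmin d ^+ 2 * S).
    by rewrite /r; field; rewrite lt0r_neq0.
  by rewrite ler_wpM2l ?sqr_ge0.
rewrite !enormE; apply: sqrtr_le_mul.
- by rewrite addr_ge0 ?ltW.
- by apply: sumr_ge0 => i _; apply: sqr_ge0.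
apply: (le_trans le_sub).
rewrite [X in _ <= X](_ : _ = (1 + r) * T + (1 + r^-1) * (r ^+ 2 * T)).
  by rewrite lerD2l ler_wpM2l // addr_ge0 ?invr_ge0 ?(ltW r_gt0).
by rewrite -/T; field; rewrite lt0r_neq0.
Qed.

End NormBounds.

Theorem lemmaA1 (R : realType) (n : nat) (d : 'rV[R]_n.+1) (v c : 'cV[R]_n.+1)
  (hd : forall i, 0 < d 0 i)
  (hc : exists i : 'I_n.+1, (i < n)%N /\ c i 0 != 0) :
  let la := lambda_star d v c in
  let mu := mu_star d v c in
  let z := z_star d v c in
  (* (a) *)
  (feasible c z /\
   (forall y, feasible c y -> y != z -> fobj d v z < fobj d v y) /\
   enorm z <= (dmin d)^-1 * enorm v) /\
  (* (b) *)
  ((forall l m, dual_fun d v c l m =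
      - (1/2) * qform (invmx (Dm d)) (v - l *: c + m *: elast R n)) /\
   0 <= mu /\
   (forall l m, 0 <= m -> (l, m) != (la, mu) ->
      dual_fun d v c l m < dual_fun d v c la mu) /\
   enorm (la *: c - mu *: elast R n) <= (1 + dmax d / dmin d) * enorm v) /\
  (* (c) *)
  (primal_value d v c = dual_value d v c /\
   primal_value d v c = fobj d v z /\
   dual_value d v c = dual_fun d v c la mu /\
   primal_value d v c = - (1/2) * dotv v z) /\
  (* (d) *)
  ((forall y, y != z -> lagrangian d v c z la mu < lagrangian d v c y la mu) /\
   hcon c z = 0 /\ 0 <= z ord_max 0 /\ 0 <= mu /\ mu * z ord_max 0 = 0 /\
   is_lagrange_multiplier d v c la mu).
Proof.
move=> la mu z.
have [orth zn_ge0 compl] := z_star_kkt v hd hc.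
have mu_ge0 : 0 <= mu := negpart_ge0 _.
have primalE := primal_valueE v hd hc.
have dualE := dual_valueE v hd hc.
have dual_star := dual_fun_z_star v hd hc.
have multipliersE : la *: c - mu *: elast R n = v - Dm d *m z.
  by rewrite Dm_mul_z_star // /lag_coef opprD addrA subKr.
split; [|split; [|split]].
- split; [exact: z_star_feasible | split; [exact: z_star_primal_strict |]].
  exact/enorm_le_dmin/qform_z_star.
- split; [exact: dual_funE | do 2 split => //; first exact: dual_fun_strict].
  by rewrite multipliersE; apply/enorm_sub_Dm_le/qform_z_star.
- by rewrite primalE dualE dual_star -fobj_z_star.
- split; first exact: lagrangian_z_star_strict.
  by do 4 split => //; rewrite /is_lagrange_multiplier primalE -dual_star.
Qed.
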